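(* Let $D$ be an integral domain. Then, the closure of the set of semilocal Pr\''ufer overrings of $D$ in the constructible topology of the space of all overrings of $D$ is the set of integrally closed overrings of $D$.
   Context: Let $D$ be an integral domain with quotient field $K$. The set of all overrings of $D$ (rings $R$ with $D\subseteq R\subseteq K$) carries the Zariski topology, whose basic open sets are $\{R \mid F\subseteq R\}$ for $F$ ranging among finite subsets of $K$; it is a spectral space. The constructible topology on a spectral space is the coarsest topology for which all open and quasi-compact subsets are clopen. *)

From HB Require Import structures.
From mathcomp Require Import all_boot all_order all_algebra.
Set Implicit Arguments. Unset Strict Implicit. Unset Printing Implicit Defensive.
Import Order.TTheory GRing.Theory Num.Theory.
Local Open Scope ring_scope.

Section Defs.
Variable K : fieldType.

Definition subring (A : K -> Prop) : Prop :=
  A 1 /\ (forall x y, A x -> A y -> A (x - y)) /\ (forall x y, A x -> A y -> A (x * y)).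

Definition quotient_field_of (D : K -> Prop) : Prop :=
  forall x : K, exists a b : K, D a /\ D b /\ b != 0 /\ x = a / b.

Definition overring (D R : K -> Prop) : Prop :=
  subring R /\ (forall x, D x -> R x).

(* Basic Zariski open sets { R overring | F ⊆ R }, F a finite subset of K. *)
Definition zbasic (D : K -> Prop) (F : seq K) (R : K -> Prop) : Prop :=
  overring D R /\ (forall x, x \in F -> R x).

Definition zopen (D : K -> Prop) (U : (K -> Prop) -> Prop) : Prop :=
  (forall R, U R -> overring D R) /\
  (forall R, U R -> exists F : seq K, zbasic D F R /\ (forall R', zbasic D F R' -> U R')).

Definition zquasicompact (D : K -> Prop) (U : (K -> Prop) -> Prop) : Prop :=
  forall (I : Type) (V : I -> (K -> Prop) -> Prop),
    (forall i, zopen D (V i)) -> (forall R, U R -> exists i, V i R) ->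
    exists (n : nat) (f : nat -> I), forall R, U R -> exists k, (k < n)%N /\ V (f k) R.

(* Closure of S in the constructible topology, i.e. the topology generated by
   the open quasi-compact sets and their complements (in the space of overrings):
   R lies in the closure iff every finite intersection of such sets containing R
   meets S. *)
Definition constructible_closure (D : K -> Prop) (S : (K -> Prop) -> Prop)
    (R : K -> Prop) : Prop :=
  overring D R /\
  forall (n : nat) (U : nat -> (K -> Prop) -> Prop) (b : nat -> bool),
    (forall k, (k < n)%N -> zopen D (U k) /\ zquasicompact D (U k)) ->
    (forall k, (k < n)%N -> (U k R <-> b k = true)) ->
    exists R', overring D R' /\ S R' /\
      (forall k, (k < n)%N -> (U k R' <-> b k = true)).

Definition ideal (R I : K -> Prop) : Prop :=
  (forall x, I x -> R x) /\ I 0 /\ (forall x y, I x -> I y -> I (x + y)) /\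
  (forall r x, R r -> I x -> I (r * x)).

Definition finitely_generated (R I : K -> Prop) : Prop :=
  exists xs : seq K, (forall x, x \in xs -> R x) /\
    forall y, I y <-> exists cs : seq K, size cs = size xs /\
       (forall c, c \in cs -> R c) /\ y = \sum_(i < size xs) cs`_i * xs`_i.

Definition colon (R I : K -> Prop) : K -> Prop := fun x => forall y, I y -> R (x * y).

Definition set_prod (I J : K -> Prop) : K -> Prop := fun z =>
  exists (n : nat) (a b : nat -> K), (forall i, (i < n)%N -> I (a i) /\ J (b i)) /\
    z = \sum_(i < n) a i * b i.

Definition invertible_ideal (R I : K -> Prop) : Prop :=
  forall z, set_prod I (colon R I) z <-> R z.

Definition prufer (R : K -> Prop) : Prop :=
  forall I, ideal R I -> finitely_generated R I -> (exists x, I x /\ x != 0) ->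
    invertible_ideal R I.

Definition maximal_ideal (R M : K -> Prop) : Prop :=
  ideal R M /\ (exists x, R x /\ ~ M x) /\
  forall J, ideal R J -> (forall x, M x -> J x) ->
    (forall x, J x <-> M x) \/ (forall x, J x <-> R x).

Definition semilocal (R : K -> Prop) : Prop :=
  exists (n : nat) (M : nat -> K -> Prop), forall N, maximal_ideal R N ->
    exists k, (k < n)%N /\ forall x, N x <-> M k x.

(* Integrally closed (in K, the quotient field of every overring). *)
Definition integral_over (R : K -> Prop) (x : K) : Prop :=
  exists p : {poly K}, p \is monic /\ (forall i, R p`_i) /\ root p x.

Definition integrally_closed (R : K -> Prop) : Prop :=
  forall x, integral_over R x -> R x.

End Defs.

(* Pruefer domains are integrally closed, so if x is integral over R but not in R, the
   overrings containing the coefficients of an equation of x but not x form a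
   constructible neighbourhood of R that contains no Pruefer ring.

   Conversely, let R be integrally closed. A basic constructible neighbourhood of R
   imposes finitely many conditions F <= T, which R satisfies, and finitely many
   conditions "F is not contained in T", each witnessed by an element of F outside R.
   By Krull's theorem every such witness is avoided by a valuation overring of R, and
   the intersection of these finitely many valuation rings lies in the neighbourhood.
   A finite intersection A of valuation rings V_1, ..., V_n is semilocal (a maximal
   ideal containing no unit of V_j is the ideal of nonunits of V_j) and Pruefer: for a
   nonzero finitely generated ideal I, Nagata's elements 1 / (1 + y + ... + y^M) give,
   for each j, an element of I (A : I) that is a unit of V_j, and an avoidance argument
   turns these into a common unit, so that I (A : I) = A. *)

From mathcomp Require Import all_boot all_algebra.
From mathcomp Require Import ring zify.
From mathcomp Require boolp classical_sets.
From Stdlib Require Import Classical.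
Set Implicit Arguments. Unset Strict Implicit. Unset Printing Implicit Defensive.
Import GRing.Theory.
Local Open Scope ring_scope.

Section Subring.
Variables (K : fieldType) (A : K -> Prop).
Hypothesis SA : subring A.

Lemma subring1 : A 1.
Proof. by case: SA. Qed.

Lemma subringB x y : A x -> A y -> A (x - y).
Proof. by case: SA => _ [SB _]; apply: SB. Qed.

Lemma subringM x y : A x -> A y -> A (x * y).
Proof. by case: SA => _ [_ SM]; apply: SM. Qed.

Lemma subring0 : A 0.
Proof. by rewrite -(subrr 1); apply: subringB; apply: subring1. Qed.

Lemma subringN x : A x -> A (- x).
Proof. by move=> Ax; rewrite -sub0r; apply: subringB => //; apply: subring0. Qed.

Lemma subringD x y : A x -> A y -> A (x + y).
Proof. by move=> Ax Ay; rewrite -(opprK y); apply: subringB => //; apply: subringN. Qed.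

Lemma subringX x n : A x -> A (x ^+ n).
Proof.
move=> Ax; elim: n => [|n IH]; first by rewrite expr0; apply: subring1.
by rewrite exprS; apply: subringM.
Qed.

Lemma subring_natr n : A n%:R.
Proof.
elim: n => [|n IH]; first exact: subring0.
by rewrite -addn1 natrD; apply: subringD => //; apply: subring1.
Qed.

Lemma subring_sum (I : Type) (r : seq I) (P : pred I) (F : I -> K) :
  (forall i, P i -> A (F i)) -> A (\sum_(i <- r | P i) F i).
Proof.
move=> AF; elim/big_rec: _ => [|i x Pi Ax]; first exact: subring0.
by apply: subringD => //; apply: AF.
Qed.

Lemma subring_prod (I : Type) (r : seq I) (P : pred I) (F : I -> K) :
  (forall i, P i -> A (F i)) -> A (\prod_(i <- r | P i) F i).
Proof.
move=> AF; elim/big_rec: _ => [|i x Pi Ax]; first exact: subring1.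
by apply: subringM => //; apply: AF.
Qed.

Lemma subring_horner (p : {poly K}) t : (forall i, A p`_i) -> A t -> A p.[t].
Proof.
move=> Ap At; rewrite horner_coef; apply: subring_sum => i _.
by apply: subringM => //; apply: subringX.
Qed.

End Subring.

Lemma subringT (K : fieldType) : subring (fun _ : K => True).
Proof. by []. Qed.

Lemma subring_bigcap (K : fieldType) (I : Type) (P : I -> Prop) (W : I -> K -> Prop) :
  (forall i, P i -> subring (W i)) -> subring (fun x => forall i, P i -> W i x).
Proof.
move=> SW; split; first by move=> i Pi; apply: subring1; apply: SW.
split=> x y Wx Wy i Pi; have SWi := SW i Pi.
  by apply: subringB => //; [apply: Wx | apply: Wy].
by apply: subringM => //; [apply: Wx | apply: Wy].
Qed.

(** * Basic and quasi-compact Zariski open sets *)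

Section Zariski.
Variables (K : fieldType) (D : K -> Prop).

Lemma zbasic_zopen F : zopen D (zbasic D F).
Proof. by split=> [T [] | T HT]; last exists F. Qed.

(* zbasic D F has a least element, and an open set containing it contains all of zbasic D F. *)
Lemma zbasic_quasicompact F : zquasicompact D (zbasic D F).
Proof.
move=> I V openV cover.
pose R0 x := forall T, zbasic D F T -> T x.
have R0F : zbasic D F R0.
  split; last by move=> x xF T [_ TF]; apply: TF.
  split; last by move=> x Dx T [[_ DT] _]; apply: DT.
  by apply: (@subring_bigcap _ _ (zbasic D F)) => T [[]].
have [i Vi] := cover R0 R0F.
have [F' [[_ R0F'] F'V]] := (openV i).2 R0 Vi.
exists 1%N, (fun _ => i) => T [oT TF]; exists 0%N; split => //.
by apply: F'V; split=> // x /R0F'; apply.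
Qed.

Lemma zquasicompact_basic_cover U : zopen D U -> zquasicompact D U ->
  exists (m : nat) (F : nat -> seq K),
    (forall T, U T -> exists2 i, (i < m)%N & zbasic D (F i) T) /\
    (forall i T, (i < m)%N -> zbasic D (F i) T -> U T).
Proof.
move=> [_ openU] qcU.
pose I := {F : seq K | forall T, zbasic D F T -> U T}.
have [||m [f cover]] := qcU I (fun F => zbasic D (sval F)).
- by move=> F; apply: zbasic_zopen.
- by move=> T /openU [F [FT FU]]; exists (exist _ F FU).
exists m, (fun i => sval (f i)); split=> [T /cover [i [im fiT]] | i T _].
  by exists i.
exact: (svalP (f i)).
Qed.

End Zariski.

(** * Pruefer domains are integrally closed *)

Lemma invertible_ideal_stable (K : fieldType) (R I : K -> Prop) x :
  subring R -> invertible_ideal R I -> (forall y, I y -> I (x * y)) -> R x.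
Proof.
move=> SR /(_ 1) [_ /(_ (subring1 SR))] [n [a [b [abI e1]]]] xI.
rewrite -(mulr1 x) e1 mulr_sumr; apply: subring_sum => // i _.
have [Ia RIb] := abI i (ltn_ord i).
by rewrite mulrA mulrC; apply: RIb; apply: xI.
Qed.

Section PowersSpan.
Variables (K : fieldType) (R : K -> Prop) (c x : K) (d : nat).
Hypothesis SR : subring R.
Hypothesis Rcx : forall i, (i < d)%N -> R (c * x ^+ i).

Definition powers_span : K -> Prop :=
  fun y => exists q : {poly K}, [/\ forall i, R q`_i, (size q <= d)%N & y = c * q.[x]].

Lemma powers_span_sub y : powers_span y -> R y.
Proof.
move=> [q [Rq sq ->]]; rewrite (horner_coef_wide _ sq) mulr_sumr.
by apply: subring_sum => // i _; rewrite mulrCA; apply: subringM => //; apply: Rcx.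
Qed.

Lemma powers_span_ideal : ideal R powers_span.
Proof.
split; first exact: powers_span_sub.
split.
  exists 0; rewrite horner0 mulr0 size_poly0; split=> // i.
  by rewrite coef0; apply: subring0.
split=> [y z [q [Rq sq ->]] [q' [Rq' sq' ->]] | r y Rr [q [Rq sq ->]]].
  exists (q + q'); split; last by rewrite hornerD mulrDr.
    by move=> i; rewrite coefD; apply: subringD.
  by rewrite (leq_trans (size_polyD _ _)) // geq_max sq sq'.
exists (r *: q); split; last by rewrite hornerZ mulrCA.
  by move=> i; rewrite coefZ; apply: subringM.
exact: leq_trans (size_scale_leq _ _) sq.
Qed.

Lemma powers_span_fg : finitely_generated R powers_span.
Proof.
exists (mkseq (fun i => c * x ^+ i) d); split.
  by move=> z /mapP [i]; rewrite mem_iota add0n => /andP [_ id] ->; apply: Rcx.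
move=> y; rewrite size_mkseq; split.
  move=> [q [Rq sq ->]]; exists (mkseq (fun i => q`_i) d).
  rewrite size_mkseq; split=> //; split; first by move=> z /mapP [i _ ->].
  rewrite (horner_coef_wide _ sq) mulr_sumr; apply: eq_bigr => i _.
  by rewrite !nth_mkseq // mulrCA.
move=> [cs [scs [Rcs ->]]]; exists (\poly_(i < d) cs`_i); split.
- move=> i; rewrite coef_poly; case: ifP => _; last exact: subring0.
  have [ics|ics] := ltnP i (size cs); first by apply: Rcs; apply: mem_nth.
  by rewrite nth_default //; apply: subring0.
- exact: size_poly.
rewrite (horner_coef_wide _ (size_poly _ _)) mulr_sumr; apply: eq_bigr => i _.
by rewrite coef_poly ltn_ord nth_mkseq // mulrCA.
Qed.

Lemma powers_span_c : (0 < d)%N -> powers_span c.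
Proof.
move=> d_gt0; exists 1; rewrite size_poly1 hornerC mulr1; split=> // i.
by rewrite coef1; case: (i == 0)%N; [apply: subring1 | apply: subring0].
Qed.

(* Multiplying by x raises the degree by one; a monic equation of degree d for x brings
   it back down. *)
Lemma powers_span_stable (p : {poly K}) :
  p \is monic -> (forall i, R p`_i) -> root p x -> size p = d.+1 ->
  forall y, powers_span y -> powers_span (x * y).
Proof.
move=> monp Rp px sp y [q [Rq sq ->]].
have lc : p`_d = 1 by move/monicP: monp; rewrite lead_coefE sp.
exists (q * 'X - (q * 'X)`_d *: p); split.
- move=> i; rewrite coefB coefZ !coefMX.
  by apply: subringB => //; [|apply: subringM => //];
    case: ifP => _; by [apply: subring0 |].
- apply/leq_sizeP => j dj; rewrite coefB coefZ.
  have [->|jd] := eqVneq j d; first by rewrite lc mulr1 subrr.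
  have dltj : (d < j)%N by rewrite ltn_neqAle eq_sym jd dj.
  rewrite [p`_j]nth_default ?sp // mulr0 subr0 coefMX.
  by case: ifP => // _; rewrite nth_default //; apply: leq_trans sq _; lia.
by rewrite hornerD hornerN hornerZ (eqP px) mulr0 subr0 hornerMX mulrCA [x * _]mulrC.
Qed.

End PowersSpan.

Lemma prufer_integrally_closed (K : fieldType) (D R : K -> Prop) :
  quotient_field_of D -> overring D R -> prufer R -> integrally_closed R.
Proof.
move=> QF [SR DR] PR x [p [monp [Rp px]]].
set d := (size p).-1.
have sp_gt1 : (1 < size p)%N := root_size_gt1 (monic_neq0 monp) px.
have sp : size p = d.+1 by rewrite /d prednK // ltnW.
have d_gt0 : (0 < d)%N by rewrite -ltnS -sp.
have [a [b [Da [Db [b0 xab]]]]] := QF x.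
set c := b ^+ d.
have Rcx : forall i, (i < d)%N -> R (c * x ^+ i).
  move=> i /ltnW id; rewrite xab /c -(subnK id) exprD -mulrA -exprMn [b * _]mulrC divfK //.
  by apply: subringM => //; apply: subringX => //; apply: DR.
apply: (@invertible_ideal_stable _ _ (powers_span R c x d)) => //.
  apply: PR; [exact: powers_span_ideal | exact: powers_span_fg |].
  by exists c; split; [apply: powers_span_c | rewrite expf_neq0].
exact: (powers_span_stable (c := c) SR monp Rp px sp).
Qed.

Lemma zbasic_polyE (K : fieldType) (D R : K -> Prop) (p : {poly K}) :
  overring D R -> zbasic D p R <-> (forall i, R p`_i).
Proof.
move=> oR; split=> [[_ Rp] i | Rp]; last by split=> // z /(nth_index 0) <-.
have [ip|ip] := ltnP i (size p); first by apply: Rp; apply: mem_nth.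
by rewrite nth_default //; apply: subring0; case: oR.
Qed.

Lemma constructible_closure_integrally_closed (K : fieldType) (D R : K -> Prop) :
  quotient_field_of D ->
  constructible_closure D (fun R' => overring D R' /\ semilocal R' /\ prufer R') R ->
  overring D R /\ integrally_closed R.
Proof.
move=> QF [oR closeR]; split=> // x [p [monp [Rp px]]].
apply: NNPP => Rx.
pose U k := zbasic D (if k == 0%N then polyseq p else x :: p).
have [k k_lt2|k k_lt2|R' [oR' [[_ [_ PR']] UR']]] :=
  closeR 2%N U (fun k => k == 0%N).
- by split; [apply: zbasic_zopen | apply: zbasic_quasicompact].
- case: k k_lt2 => [|[|//]] _; rewrite /U /=.
    by split=> // _; apply/zbasic_polyE.
  by split=> // [[_ /(_ x (mem_head _ _))]].
have U0R' : zbasic D p R' by apply: (UR' 0%N isT).2.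
have R'x : R' x.
  apply: (prufer_integrally_closed QF oR' PR').
  by exists p; split=> //; split=> //; apply/(zbasic_polyE _ oR').
suff : U 1%N R' by move/(UR' 1%N isT).
split=> // z; rewrite inE => /predU1P [-> // | zp].
exact: U0R'.2.
Qed.

(** * Valuation rings *)

Definition valuation_ring (K : fieldType) (V : K -> Prop) :=
  subring V /\ forall x : K, x != 0 -> V x \/ V x^-1.

Definition unit_of (K : fieldType) (V : K -> Prop) (x : K) := [/\ V x, V x^-1 & x != 0].

Definition nonunit_of (K : fieldType) (V : K -> Prop) (x : K) := V x /\ ~ unit_of V x.

Section ValuationRing.
Variables (K : fieldType) (V : K -> Prop).
Hypothesis VV : valuation_ring V.
Let SV : subring V := VV.1.

Lemma unit_of1 : unit_of V 1.
Proof. by split; rewrite ?invr1 ?oner_neq0 //; apply: subring1. Qed.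

Lemma unit_ofM x y : unit_of V x -> unit_of V y -> unit_of V (x * y).
Proof.
move=> [Vx Vx' x0] [Vy Vy' y0]; split; last by rewrite mulf_neq0.
  exact: subringM.
by rewrite invfM; apply: subringM.
Qed.

Lemma unit_ofV x : unit_of V x -> unit_of V x^-1.
Proof. by case=> Vx Vx' x0; split; rewrite ?invrK ?invr_eq0. Qed.

Lemma unit_or_nonunit x : V x -> unit_of V x \/ nonunit_of V x.
Proof. by move=> Vx; case: (classic (unit_of V x)) => ux; [left | right]. Qed.

Lemma nonunit_of0 : nonunit_of V 0.
Proof. by split; [apply: subring0 | case; rewrite eqxx]. Qed.

Lemma nonunit_ofM x y : nonunit_of V x -> V y -> nonunit_of V (x * y).
Proof.
move=> [Vx nux] Vy; split; first exact: subringM.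
case=> _ Vxy'; rewrite mulf_eq0 negb_or => /andP [x0 y0]; apply: nux; split=> //.
have -> : x^-1 = y * (x * y)^-1 by rewrite invfM mulrCA mulfV // mulr1.
exact: subringM.
Qed.

Lemma nonunit_ofN x : nonunit_of V x -> nonunit_of V (- x).
Proof.
by move=> nx; rewrite -mulrN1; apply: nonunit_ofM => //; apply: subringN => //; apply: subring1.
Qed.

(* Of x and y, the one dividing the other in V factors out of x + y. *)
Lemma nonunit_ofD x y : nonunit_of V x -> nonunit_of V y -> nonunit_of V (x + y).
Proof.
move=> nx ny; have [-> | x0] := eqVneq x 0; first by rewrite add0r.
have [-> | y0] := eqVneq y 0; first by rewrite addr0.
have [Vxy | Vyx] := VV.2 (x / y) (mulf_neq0 x0 (invr_neq0 y0)).
  have -> : x + y = y * (x / y + 1) by rewrite mulrDr mulr1 mulrC divfK.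
  by apply: nonunit_ofM => //; apply: subringD => //; apply: subring1.
have -> : x + y = x * (1 + y / x) by rewrite mulrDr mulr1 mulrC divfK.
apply: nonunit_ofM => //; apply: subringD => //; first exact: subring1.
by rewrite -invf_div.
Qed.

Lemma unit_ofD x y : unit_of V x -> nonunit_of V y -> unit_of V (x + y).
Proof.
move=> ux ny; have [Vx _ _] := ux.
have [//|nxy] := unit_or_nonunit (subringD SV Vx ny.1).
by have := nonunit_ofD nxy (nonunit_ofN ny); rewrite addrK => -[].
Qed.

Lemma nonunit_of_sum (I : Type) (r : seq I) (P : pred I) (F : I -> K) :
  (forall i, P i -> nonunit_of V (F i)) -> nonunit_of V (\sum_(i <- r | P i) F i).
Proof.
move=> nF; elim/big_rec: _ => [|i x Pi nx]; first exact: nonunit_of0.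
by apply: nonunit_ofD => //; apply: nF.
Qed.

Lemma unit_of_prod (I : Type) (r : seq I) (P : pred I) (F : I -> K) :
  (forall i, P i -> unit_of V (F i)) -> unit_of V (\prod_(i <- r | P i) F i).
Proof.
move=> uF; elim/big_rec: _ => [|i x Pi ux]; first exact: unit_of1.
by apply: unit_ofM => //; apply: uF.
Qed.

Lemma nonunit_of_prod (I : eqType) (r : seq I) (F : I -> K) i :
  i \in r -> nonunit_of V (F i) -> (forall k, k \in r -> V (F k)) ->
  nonunit_of V (\prod_(k <- r) F k).
Proof.
move=> ir nFi VF; rewrite (big_rem _ ir) /=; apply: nonunit_ofM => //.
by rewrite big_seq; apply: subring_prod => // k /mem_rem; apply: VF.
Qed.

Lemma nonunit_of_inv_notin y : ~ V y -> nonunit_of V y^-1.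
Proof.
move=> Vy; have y0 : y != 0 by apply: contra_notN Vy => /eqP ->; apply: subring0.
split; first by case: (VV.2 y y0).
by case=> _; rewrite invrK.
Qed.

End ValuationRing.

Lemma multiples_avoid_succ (S : nat -> Prop) :
  ~ S 1%N -> (forall N M, S N -> (N %| M)%N -> (0 < M)%N -> S M) ->
  (forall M, (0 < M)%N -> S M -> ~ S M.+1) ->
  exists2 N, (0 < N)%N & forall M, (N %| M)%N -> ~ S M.+1.
Proof.
move=> S1 S_dvd S_succ.
case: (classic (exists2 N, (0 < N)%N & S N)) => [[N N_gt0 SN] | noS].
  exists N => // -[_|M NM]; first exact: S1.
  by apply: S_succ => //; apply: S_dvd NM _.
by exists 1%N => // M _ SM; apply: noS; exists M.+1.
Qed.

Lemma common_multiple_seq (T : eqType) (P : T -> nat -> Prop) (s : seq T) :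
  (forall t, t \in s -> exists2 N, (0 < N)%N & forall M, (N %| M)%N -> P t M) ->
  exists2 N, (0 < N)%N & forall t M, t \in s -> (N %| M)%N -> P t M.
Proof.
elim: s => [|a s IH] Ps; first by exists 1%N.
have [Na Na_gt0 Pa] := Ps a (mem_head _ _).
have [|Ns Ns_gt0 Pss] := IH; first by move=> t ts; apply: Ps; rewrite inE ts orbT.
exists (Na * Ns)%N => [|t M]; first by rewrite muln_gt0 Na_gt0.
rewrite inE => /predU1P [-> | ts] NM.
  by apply: Pa; apply: dvdn_trans NM; apply: dvdn_mulr.
by apply: Pss => //; apply: dvdn_trans NM; apply: dvdn_mull.
Qed.

Definition geom_sum (K : fieldType) (y : K) (M : nat) := \sum_(t < M.+1) y ^+ t.

Lemma geom_sum_recl (K : fieldType) (y : K) M : geom_sum y M = 1 + y * \sum_(t < M) y ^+ t.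
Proof.
rewrite /geom_sum big_ord_recl expr0 mulr_sumr; congr (_ + _).
by apply: eq_bigr => i _; rewrite exprS.
Qed.

Lemma geom_sum_rev (K : fieldType) (y : K) M :
  y != 0 -> geom_sum y M = y ^+ M * geom_sum y^-1 M.
Proof.
move=> y0; rewrite /geom_sum mulr_sumr (reindex_inj rev_ord_inj) /=.
apply: eq_bigr => i _; have iM : (i <= M)%N by rewrite -ltnS.
by rewrite subSS -[in y ^+ M](subnK iM) exprD exprVn mulfK // expf_neq0.
Qed.

Section GeometricSums.
Variables (K : fieldType) (V : K -> Prop).
Hypothesis VV : valuation_ring V.
Let SV : subring V := VV.1.

Lemma geom_sum_nonunit y M : nonunit_of V y -> unit_of V (geom_sum y M).
Proof.
move=> ny; rewrite geom_sum_recl; apply: unit_ofD => //; first exact: unit_of1.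
apply: nonunit_ofM => //.
by apply: subring_sum => // t _; apply: subringX => //; case: ny.
Qed.

(* If y - 1 is a unit, geom_sum y M = (y^(M+1) - 1) / (y - 1); otherwise geom_sum y M = M
   + 1 modulo the maximal ideal. Either way the bad M + 1 form a set closed under
   multiples and containing no two consecutive integers. *)
Lemma geom_sum_unit_eventually y : V y ->
  exists2 N, (0 < N)%N & forall M, (N %| M)%N -> unit_of V (geom_sum y M).
Proof.
move=> Vy; have [uy|ny] := unit_or_nonunit Vy; last first.
  by exists 1%N => // M _; apply: geom_sum_nonunit.
have VyB1 n : V (y ^+ n - 1).
  by apply: subringB => //; [apply: subringX | apply: subring1].
have Vy1 : V (y - 1) by rewrite -[y in y - 1]expr1.
have [uy1|ny1] := unit_or_nonunit Vy1.
  have [|N M SN|M _ SM|N N_gt0 NS] :=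
    @multiples_avoid_succ (fun n => nonunit_of V (y ^+ n - 1)).
  - by rewrite expr1 => -[].
  - move=> /dvdnP [k ->] _; rewrite mulnC exprM subrX1; apply: nonunit_ofM => //.
    by apply: subring_sum => // i _; do 2 apply: subringX => //.
  - case=> _; apply; have -> : y ^+ M.+1 - 1 = (y - 1) + (y ^+ M - 1) * y.
      by rewrite exprSr; ring.
    by apply: unit_ofD => //; apply: nonunit_ofM.
  exists N => // M NM.
  have uM : unit_of V (y ^+ M.+1 - 1).
    by have [//|nM] := unit_or_nonunit (VyB1 M.+1); case: (NS M NM).
  have y10 : y - 1 != 0 by case: uy1.
  rewrite /geom_sum -(mulKf y10 (\sum_(t < M.+1) y ^+ t)) -subrX1.
  by apply: unit_ofM => //; apply: unit_ofV.
have [|N M SN|M _ SM|N N_gt0 NS] := @multiples_avoid_succ (fun n => nonunit_of V n%:R).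
- by case=> _; apply; apply: unit_of1.
- move=> /dvdnP [k ->] _; rewrite natrM mulrC; apply: nonunit_ofM => //.
  exact: subring_natr.
- case=> _; apply; rewrite -addn1 natrD mulr1n addrC.
  by apply: unit_ofD => //; apply: unit_of1.
exists N => // M NM.
have -> : geom_sum y M = M.+1%:R + \sum_(t < M.+1) (y ^+ t - 1).
  by rewrite sumrB sumr_const card_ord addrC subrK.
apply: unit_ofD => //.
  by have [//|nM] := unit_or_nonunit (subring_natr SV M.+1); case: (NS M NM).
apply: nonunit_of_sum => // t _; rewrite subrX1; apply: nonunit_ofM => //.
by apply: subring_sum => // i _; apply: subringX.
Qed.

(* For y outside V, geom_sum y M = y^M * geom_sum y^-1 M with the second factor a unit. *)
Lemma geom_sum_inv_mem y M : (0 < M)%N -> (V y -> unit_of V (geom_sum y M)) ->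
  V (geom_sum y M)^-1 /\ V (y * (geom_sum y M)^-1).
Proof.
move=> M_gt0 uVy; case: (classic (V y)) => [Vy | Vy].
  by have [_ Vg' _] := uVy Vy; split=> //; apply: subringM.
have y0 : y != 0 by apply: contra_notN Vy => /eqP ->; apply: subring0.
have ny' := nonunit_of_inv_notin VV Vy; have [Vy' _] := ny'.
have [_ Vg' _] := geom_sum_nonunit M ny'.
rewrite geom_sum_rev // invfM -exprVn; split.
  by apply: subringM => //; apply: subringX.
have -> : y^-1 ^+ M = y^-1 * y^-1 ^+ M.-1 by rewrite -exprS prednK.
by rewrite !mulrA mulfV // mul1r; apply: subringM => //; apply: subringX.
Qed.

End GeometricSums.

(** * Finite intersections of valuation rings are semilocal Pruefer domains *)

Definition bigcap_ring (K : fieldType) (W : nat -> K -> Prop) (js : seq nat) : K -> Prop :=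
  fun x => forall j, j \in js -> W j x.

Lemma prod_mem_nonempty (K : fieldType) (L : K -> Prop) (I : eqType) (s : seq I) (f : I -> K) :
  (forall x y, L x -> L y -> L (x * y)) -> s != [::] ->
  (forall i, i \in s -> L (f i)) -> L (\prod_(i <- s) f i).
Proof.
move=> LM; elim: s => // i [|i' s] IH _ Lf; first by rewrite big_seq1; apply: Lf; apply: mem_head.
rewrite big_cons; apply: LM; first by apply: Lf; apply: mem_head.
by apply: IH => // k ks; apply: Lf; rewrite inE ks orbT.
Qed.

(* At j0 only the product is a unit; at any other j only f j0 is. *)
Lemma unit_of_addr_prod (K : fieldType) (W : nat -> K -> Prop) (f : nat -> K) j0 js :
  j0 \notin js -> (forall j, j \in j0 :: js -> valuation_ring (W j)) ->
  (forall i, i \in j0 :: js -> nonunit_of (W i) (f i)) ->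
  (forall i j, i \in j0 :: js -> j \in j0 :: js -> j != i -> unit_of (W j) (f i)) ->
  forall j, j \in j0 :: js -> unit_of (W j) (f j0 + \prod_(i <- js) f i).
Proof.
move=> j0js Wv nf uf j.
have sub_js i : i \in js -> i \in j0 :: js by rewrite inE => ->; rewrite orbT.
have j0_neq i : i \in js -> j0 != i by move=> ijs; apply/eqP => e; move: j0js; rewrite e ijs.
rewrite inE => /predU1P [-> | jjs].
  have Wj0 := Wv j0 (mem_head _ _).
  rewrite addrC; apply: unit_ofD => //; last exact: nf j0 (mem_head _ _).
  rewrite big_seq; apply: unit_of_prod => // i ijs.
  by apply: uf; rewrite ?mem_head ?sub_js ?j0_neq.
have Wj := Wv j (sub_js j jjs).
apply: unit_ofD => //; first by apply: uf; rewrite ?mem_head ?sub_js // eq_sym j0_neq.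
apply: (nonunit_of_prod Wj jjs (nf j (sub_js j jjs))) => k kjs.
by have [-> | jk] := eqVneq j k; [case: (nf k) | case: (uf k j)]; rewrite ?sub_js.
Qed.

(* Induction on the number of rings: for each i, an element of L that is a unit of every
   W j with j != i. *)
Lemma common_unit_of (K : fieldType) (W : nat -> K -> Prop) (L : K -> Prop) (js : seq nat) :
  (forall x y, L x -> L y -> L (x + y)) -> (forall x y, L x -> L y -> L (x * y)) ->
  js != [::] -> uniq js -> (forall j, j \in js -> valuation_ring (W j)) ->
  (forall x, L x -> bigcap_ring W js x) ->
  (forall j, j \in js -> exists2 z, L z & unit_of (W j) z) ->
  exists2 z, L z & forall j, j \in js -> unit_of (W j) z.
Proof.
move=> LD LM; have [n] := ubnP (size js); elim: n js => // n IH [//|j0 js].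
rewrite ltnS => sz _ uq Wv LW units.
have [-> | js0] := eqVneq js [::].
  by have [z Lz uz] := units j0 (mem_head _ _); exists z => // j; rewrite inE => /eqP ->.
have fP i : exists f, i \in j0 :: js ->
    L f /\ forall j, j \in j0 :: js -> j != i -> unit_of (W j) f.
  case: (boolP (i \in j0 :: js)) => ijs; last by exists 0.
  have [||||||f Lf uf] := IH (rem i (j0 :: js)).
  - by rewrite size_rem //=; apply: leq_trans sz.
  - by rewrite -size_eq0 size_rem //= size_eq0.
  - exact: rem_uniq.
  - by move=> j /mem_rem; apply: Wv.
  - by move=> x Lx j /mem_rem; apply: LW.
  - by move=> j /mem_rem; apply: units.
  by exists f => _; split=> // j jjs ji; apply: uf; rewrite (mem_rem_uniq _ uq) inE ji.
have [f {}fP] := boolp.choice fP.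
have Lf i : i \in j0 :: js -> L (f i) by case/fP.
case: (classic (exists2 i, i \in j0 :: js & unit_of (W i) (f i))) => [[i ijs ui] | nu].
  exists (f i) => [|j jjs]; first exact: Lf.
  by have [-> // | ji] := eqVneq j i; apply: (fP i ijs).2.
exists (f j0 + \prod_(i <- js) f i).
  apply: LD; first exact: Lf (mem_head _ _).
  by apply: prod_mem_nonempty => // i ijs; apply: Lf; rewrite inE ijs orbT.
apply: unit_of_addr_prod => //; first by case/andP: uq.
  by move=> i ijs; split=> [|ui]; [apply: LW (Lf i ijs) i ijs | apply: nu; exists i].
by move=> i j ijs jjs ji; apply: (fP i ijs).2.
Qed.

Lemma ideal_full_of_unit (K : fieldType) (A N : K -> Prop) z :
  subring A -> ideal A N -> N z -> A z^-1 -> z != 0 -> forall x, A x -> N x.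
Proof.
move=> SA [_ [_ [_ NM]]] Nz Az' z0 x Ax.
by rewrite -[x]mulr1 -(mulVf z0) mulrA; apply: NM => //; apply: subringM.
Qed.

Section SetProdColon.
Variables (K : fieldType) (A I : K -> Prop).
Hypothesis SA : subring A.

Lemma set_prod_colon_ideal : ideal A (set_prod I (colon A I)).
Proof.
split.
  move=> z [m [a [b [abI ->]]]]; apply: subring_sum => // i _.
  by have [Ia Cb] := abI i (ltn_ord i); rewrite mulrC; apply: Cb.
split; first by exists 0%N, (fun _ => 0), (fun _ => 0); rewrite big_ord0.
split.
  move=> z z' [m [a [b [abI ->]]]] [m' [a' [b' [abI' ->]]]].
  exists (m + m')%N, (fun i => if (i < m)%N then a i else a' (i - m)%N),
    (fun i => if (i < m)%N then b i else b' (i - m)%N); split.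
    move=> i im; case: ifP => h; first exact: abI.
    by apply: abI'; rewrite ltn_subLR // leqNgt h.
  rewrite big_split_ord /=; congr (_ + _); apply: eq_bigr => i _ /=.
    by rewrite ltn_ord.
  by rewrite ltnNge leq_addr /= addKn.
move=> c z Ac [m [a [b [abI ->]]]]; exists m, a, (fun i => c * b i); split.
  move=> i im; have [Ia Cb] := abI i im; split=> // y Iy.
  by rewrite -mulrA; apply: subringM => //; apply: Cb.
by rewrite mulr_sumr; apply: eq_bigr => i _; rewrite mulrCA.
Qed.

Lemma invertible_of_unit z :
  set_prod I (colon A I) z -> A z^-1 -> z != 0 -> invertible_ideal A I.
Proof.
move=> Lz Az' z0 y; split; first by case: set_prod_colon_ideal => LA _; apply: LA.
exact: ideal_full_of_unit set_prod_colon_ideal Lz Az' z0 y.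
Qed.

End SetProdColon.

Definition spanned_by (K : fieldType) (R I : K -> Prop) (xs : seq K) :=
  forall y, I y <-> exists cs : seq K, size cs = size xs /\ (forall c, c \in cs -> R c) /\
     y = \sum_(i < size xs) cs`_i * xs`_i.

Lemma spanned_by_mem (K : fieldType) (R I : K -> Prop) (xs : seq K) x :
  subring R -> spanned_by R I xs -> x \in xs -> I x.
Proof.
move=> SR spanI xxs; apply/spanI; exists (mkseq (fun i => (i == index x xs)%:R) (size xs)).
rewrite size_mkseq; split=> //; split.
  by move=> c /mapP [i _ ->]; case: (i == _); [apply: subring1 | apply: subring0].
have ix : (index x xs < size xs)%N by rewrite index_mem.
rewrite (bigD1 (Ordinal ix)) //= nth_mkseq // eqxx mul1r nth_index // big1 ?addr0 //.
move=> i ne; rewrite nth_mkseq //; case: eqP => [ei | _]; last by rewrite mul0r.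
by move: ne; rewrite -val_eqE /= ei eqxx.
Qed.

Lemma valuation_ring_divisor_seq (K : fieldType) (V : K -> Prop) (xs : seq K) :
  valuation_ring V -> (exists2 x, x \in xs & x != 0) ->
  exists g, [/\ g \in xs, g != 0 & forall x, x \in xs -> V (x / g)].
Proof.
move=> VV; have SV := VV.1; elim: xs => [[]//|a xs IH] [x xin x0].
have Vaa : a != 0 -> V (a / a) by move=> a0; rewrite mulfV //; apply: subring1.
case: (classic (exists2 x, x \in xs & x != 0)) => [nz | zero]; last first.
  have a0 : a != 0.
    by move: xin; rewrite inE => /predU1P [<- // | xxs]; case: zero; exists x.
  exists a; split; rewrite ?mem_head // => y; rewrite inE => /predU1P [-> | yxs].
    exact: Vaa.
  have -> : y = 0 by apply: NNPP => /eqP y0; apply: zero; exists y.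
  by rewrite mul0r; apply: subring0.
have [g [gxs g0 Vg]] := IH nz.
have keep_g : V (a / g) ->
    exists g', [/\ g' \in a :: xs, g' != 0 & forall z, z \in a :: xs -> V (z / g')].
  move=> Vag; exists g; split; rewrite ?inE ?gxs ?orbT // => z.
  by rewrite inE => /predU1P [-> // | /Vg].
have [a0 | a0] := eqVneq a 0; first by apply: keep_g; rewrite a0 mul0r; apply: subring0.
have [Vag | Vga] := VV.2 (a / g) (mulf_neq0 a0 (invr_neq0 g0)); first exact: keep_g.
exists a; split; rewrite ?mem_head // => z; rewrite inE => /predU1P [-> | zxs].
  exact: Vaa.
have -> : z / a = (z / g) * (a / g)^-1 by rewrite invf_div mulrA divfK.
by apply: subringM => //; apply: Vg.
Qed.

Section FiniteValuationIntersection.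
Variables (K : fieldType) (W : nat -> K -> Prop) (js : seq nat).
Hypotheses (js0 : js != [::]) (uq : uniq js).
Hypothesis Wv : forall j, j \in js -> valuation_ring (W j).

Local Notation A := (bigcap_ring W js).

Lemma subring_bigcap_ring : subring A.
Proof. by apply: subring_bigcap => j /Wv []. Qed.

Let SA := subring_bigcap_ring.

Lemma bigcap_ring_inv_unit z :
  (forall j, j \in js -> unit_of (W j) z) -> A z^-1 /\ z != 0.
Proof.
move=> uz; split=> [j /uz [] //|].
by case: js js0 uz => // j s _ /(_ j (mem_head _ _)) [].
Qed.

Lemma bigcap_nonunit_ideal j : j \in js -> ideal A (fun x => A x /\ ~ unit_of (W j) x).
Proof.
move=> jjs; have VWj := Wv jjs; have Wj x : A x -> W j x by move/(_ j jjs).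
split; first by move=> x [].
split; first by split; [apply: subring0 | case: (nonunit_of0 VWj)].
split=> [x y [Ax nx] [Ay ny] | r x Ar [Ax nx]].
  split; first exact: (subringD SA Ax Ay).
  by have [] := nonunit_ofD VWj (conj (Wj x Ax) nx) (conj (Wj y Ay) ny).
split; first exact: (subringM SA Ar Ax).
by rewrite mulrC; have [] := nonunit_ofM VWj (conj (Wj x Ax) nx) (Wj r Ar).
Qed.

(* A maximal ideal containing a unit of every W j would contain 1; otherwise it lies in
   the nonunits of some W j, hence equals them. *)
Lemma bigcap_valuation_semilocal : semilocal A.
Proof.
exists (size js), (fun k x => A x /\ ~ unit_of (W (nth 0%N js k)) x).
move=> N [Nid [[x0 [Ax0 Nx0]] Nmax]].
case: (classic (exists2 j, j \in js & forall x, N x -> ~ unit_of (W j) x)) => [[j jjs nuN] | uN].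
  exists (index j js); rewrite index_mem nth_index //; split=> //.
  have [NA _] := Nid.
  have [|eqN|fullP] := Nmax _ (bigcap_nonunit_ideal jjs).
  - by move=> x Nx; split; [apply: NA | apply: nuN].
  - by move=> x; apply: iff_sym.
  by have [_ []] := (fullP 1).2 (subring1 SA); apply: unit_of1; apply: Wv.
have [NA [_ [ND NM]]] := Nid.
have [||||||z Nz uz] := @common_unit_of _ W N js ND.
- by move=> x y Nx Ny; apply: NM (NA x Nx) Ny.
- by [].
- by [].
- exact: Wv.
- exact: NA.
- move=> j jjs; apply: NNPP => nz; apply: uN; exists j => // x Nx ux.
  by apply: nz; exists x.
have [Az' z0] := bigcap_ring_inv_unit uz.
by case: Nx0; apply: ideal_full_of_unit Nid Nz Az' z0 _ Ax0.
Qed.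

(* Nagata's trick, made uniform over the finitely many pairs (W i, y) by a common
   multiple of the admissible M. *)
Lemma geom_sum_denominators (ys : seq K) :
  exists2 M, (0 < M)%N & forall y, y \in ys ->
    [/\ A (geom_sum y M)^-1, A (y * (geom_sum y M)^-1) &
        forall i, i \in js -> W i y -> unit_of (W i) (geom_sum y M)].
Proof.
have [|N N_gt0 NP] := @common_multiple_seq _
    (fun iy M => W iy.1 iy.2 -> unit_of (W iy.1) (geom_sum iy.2 M))
    [seq (i, y) | i <- js, y <- ys].
  move=> _ /allpairsP [[i y] [/= ijs _ ->]] /=.
  case: (classic (W i y)) => [Wy | Wy]; last by exists 1%N.
  have [N N_gt0 NP] := geom_sum_unit_eventually (Wv ijs) Wy.
  by exists N => // M NM _; apply: NP.
have uN i y : i \in js -> y \in ys -> W i y -> unit_of (W i) (geom_sum y N).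
  by move=> ijs yys; apply: (NP (i, y)) => //; apply/allpairsP; exists (i, y).
exists N => // y yys; split=> i ijs; last exact: uN.
  by have [] := geom_sum_inv_mem (Wv ijs) N_gt0 (uN i y ijs yys).
by have [] := geom_sum_inv_mem (Wv ijs) N_gt0 (uN i y ijs yys).
Qed.

(* With g a generator dividing all others in W j, the element b = prod_y 1 / geom_sum y M
   over y = x / g is a unit of W j, and b / g lies in (A : I). *)
Lemma set_prod_colon_local_unit (I : K -> Prop) (xs : seq K) j :
  spanned_by A I xs -> (exists2 x, x \in xs & x != 0) -> j \in js ->
  exists2 z, set_prod I (colon A I) z & unit_of (W j) z.
Proof.
move=> spanI xs_nz jjs.
have [g [gxs g0 Wjg]] := valuation_ring_divisor_seq (Wv jjs) xs_nz.
set ys := [seq x / g | x <- xs].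
have [M M_gt0 gsM] := geom_sum_denominators ys.
set b := \prod_(y <- ys) (geom_sum y M)^-1.
have Ab_y y : y \in ys -> A (b * y).
  move=> yys; have [_ Ay _] := gsM y yys.
  rewrite /b (big_rem _ yys) /= mulrAC [_^-1 * y]mulrC; apply: (subringM SA) => //.
  by rewrite big_seq; apply: (subring_prod SA) => // y' /mem_rem /gsM [].
exists b.
  exists 1%N, (fun _ => g), (fun _ => b / g); split; last by rewrite big_ord1 mulrC divfK.
  move=> i _; split; first exact: spanned_by_mem SA spanI gxs.
  move=> w /spanI [cs [scs [Acs ->]]]; rewrite mulr_sumr; apply: (subring_sum SA) => // i' _.
  rewrite mulrCA -!mulrA [g^-1 * _]mulrC; apply: (subringM SA) => //.
    by apply: Acs; apply: mem_nth; rewrite scs.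
  by apply: Ab_y; apply: map_f; apply: mem_nth.
rewrite /b big_seq; apply: unit_of_prod => // [|y yys]; first exact: Wv.
apply: unit_ofV; have [_ _ uy] := gsM y yys; apply: uy jjs _.
by case/mapP: yys => x xxs ->; apply: Wjg.
Qed.

Lemma bigcap_valuation_prufer : prufer A.
Proof.
move=> I _ [xs [_ spanI]] [x1 [Ix1 x10]].
have xs_nz : exists2 x, x \in xs & x != 0.
  apply: NNPP => xs0; move: x10; have [cs [_ [_ ->]]] := (spanI x1).1 Ix1.
  rewrite big1 ?eqxx // => i _; suff -> : xs`_i = 0 by rewrite mulr0.
  by apply: NNPP => /eqP xi0; apply: xs0; exists xs`_i => //; apply: mem_nth.
have [LA [_ [LD LM]]] := set_prod_colon_ideal I SA.
have [||||||u Lu uu] := @common_unit_of _ W (set_prod I (colon A I)) js LD.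
- by move=> x y Lx Ly; apply: LM (LA x Lx) Ly.
- by [].
- by [].
- exact: Wv.
- exact: LA.
- by move=> j; apply: set_prod_colon_local_unit spanI xs_nz.
have [Au' u0] := bigcap_ring_inv_unit uu.
exact: (invertible_of_unit SA Lu Au' u0).
Qed.

End FiniteValuationIntersection.

(** * Krull's existence theorem for valuation overrings *)

Definition adjoin (K : fieldType) (B : K -> Prop) (t : K) : K -> Prop :=
  fun x => exists p : {poly K}, (forall i, B p`_i) /\ x = p.[t].

Section Adjoin.
Variables (K : fieldType) (B : K -> Prop) (t : K).
Hypothesis SB : subring B.

Lemma subring_adjoin : subring (adjoin B t).
Proof.
have coefB1 i : B (1 : {poly K})`_i.
  by rewrite coef1; case: (i == 0)%N; [apply: subring1 | apply: subring0].
split; first by exists 1; rewrite hornerC.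
split=> _ _ [p [Bp ->]] [q [Bq ->]].
  exists (p - q); split; last by rewrite hornerD hornerN.
  by move=> i; rewrite coefB; apply: subringB.
exists (p * q); split; last by rewrite hornerM.
by move=> i; rewrite coefM; apply: subring_sum => // j _; apply: subringM.
Qed.

Lemma adjoin_sub x : B x -> adjoin B t x.
Proof.
move=> Bx; exists x%:P; split; last by rewrite hornerC.
by move=> i; rewrite coefC; case: (i == 0)%N; last apply: subring0.
Qed.

Lemma adjoin_gen : adjoin B t t.
Proof.
exists 'X; split; last by rewrite hornerX.
by move=> i; rewrite coefX; case: (i == 1)%N; [apply: subring1 | apply: subring0].
Qed.

Lemma adjoin_min (T : K -> Prop) :
  subring T -> (forall x, B x -> T x) -> T t -> forall x, adjoin B t x -> T x.
Proof. by move=> ST BT Tt _ [p [Bp ->]]; apply: subring_horner => // i; apply: BT. Qed.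

End Adjoin.

(* A relation y = p(1/y) with coefficients in R, multiplied by y^(deg p), is an integral
   equation for y over R. *)
Lemma adjoin_inv_notin (K : fieldType) (R : K -> Prop) y :
  subring R -> integrally_closed R -> ~ R y -> ~ adjoin R y^-1 y.
Proof.
move=> SR IC Ry [p [Rp ey]].
have y0 : y != 0 by apply: contra_notN Ry => /eqP ->; apply: subring0.
apply: Ry; apply: IC.
set d := size p.
have d_gt0 : (0 < d)%N.
  by rewrite size_poly_gt0; apply: contra_neq y0 => p0; rewrite ey p0 horner0.
exists ('X^d - \poly_(k < d) p`_(d.-1 - k)); split.
  by rewrite monicE lead_coefDl ?lead_coefXn // size_polyXn size_polyN ltnS size_poly.
split.
  move=> i; rewrite coefB coefXn coef_poly; apply: subringB => //.
    by case: (i == d); [apply: subring1 | apply: subring0].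
  by case: (i < d)%N; [apply: Rp | apply: subring0].
rewrite rootE hornerD hornerN hornerXn horner_poly subr_eq0; apply/eqP.
have -> : y ^+ d = y * y ^+ d.-1 by rewrite -exprS prednK.
rewrite {1}ey horner_coef -/d mulr_suml (reindex_inj rev_ord_inj) /=.
apply: eq_bigr => i _; have id : (i <= d.-1)%N by rewrite -ltnS prednK.
rewrite -[in y ^+ d.-1](subnK id) exprD (_ : d - i.+1 = d.-1 - i)%N; last by lia.
by rewrite mulrA -[p`_ _ * _ * _]mulrA -exprMn mulVf // expr1n mulr1.
Qed.

Definition maximal_noninv (K : fieldType) (B : K -> Prop) (z : K) :=
  [/\ subring B, B z, z != 0, ~ B z^-1 &
      forall B', subring B' -> (forall x, B x -> B' x) -> ~ B' z^-1 -> forall x, B' x -> B x].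

Definition inv_expansion (K : fieldType) (B : K -> Prop) (z t : K) (d : nat) :=
  exists u : nat -> K, (forall i, B (u i)) /\ 1 = z * \sum_(i < d) u i * t ^+ i.

Lemma inv_expansion0 (K : fieldType) (B : K -> Prop) z t : ~ inv_expansion B z t 0.
Proof. by move=> [u [_]]; rewrite big_ord0 mulr0 => /eqP; rewrite oner_eq0. Qed.

Lemma adjoin_inv_expansion (K : fieldType) (B : K -> Prop) z t :
  z != 0 -> adjoin B t z^-1 -> exists d, inv_expansion B z t d.
Proof.
move=> z0 [p [Bp e]]; exists (size p), (fun i => p`_i); split=> //.
by rewrite -horner_coef -e mulfV.
Qed.

Lemma inv_expansion_powers (K : fieldType) (B : K -> Prop) z t n (c : nat -> K) :
  subring B -> B z -> (forall k, B (c k)) ->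
  t ^+ n.+1 = z * \sum_(k < n.+1) c k * t ^+ k ->
  forall m, exists e : nat -> K, (forall k, B (e k)) /\
     t ^+ (n.+1 + m) = z * \sum_(k < n.+1) e k * t ^+ k.
Proof.
move=> SB Bz Bc tc; elim=> [|m [e [Be te]]]; first by exists c; rewrite addn0.
pose f1 k := if k is k'.+1 then e k' else 0.
exists (fun k => f1 k + e n * z * c k); split.
  move=> k; apply: subringD => //; last by apply: subringM => //; apply: subringM.
  by case: k => [|k]; [apply: subring0 | apply: Be].
rewrite addnS exprS te.
have -> : \sum_(k < n.+1) (f1 k + e n * z * c k) * t ^+ k =
    \sum_(k < n.+1) f1 k * t ^+ k + \sum_(k < n.+1) e n * z * c k * t ^+ k.
  by rewrite -big_split; apply: eq_bigr => k _; rewrite mulrDl.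
rewrite [X in _ = z * (X + _)]big_ord_recl /= mul0r add0r.
have -> : \sum_(i < n.+1) e n * z * c i * t ^+ i = e n * t ^+ n.+1.
  by rewrite tc mulrA mulr_sumr; apply: eq_bigr => i _; rewrite !mulrA.
rewrite [X in t * (z * X)]big_ord_recr /= mulrCA mulrDr; congr (_ * (_ + _)).
  rewrite mulr_sumr; apply: eq_bigr => i _.
  by rewrite /bump /= add1n add0n exprS mulrCA.
by rewrite exprS mulrCA.
Qed.

(* Rewrite each t^i with i >= n through the relation for t^n. *)
Lemma inv_expansion_lower (K : fieldType) (B : K -> Prop) z t n d (c : nat -> K) :
  subring B -> B z -> (forall k, B (c k)) -> t ^+ n = z * \sum_(k < n) c k * t ^+ k ->
  inv_expansion B z t d -> (n < d)%N -> inv_expansion B z t n.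
Proof.
move=> SB Bz Bc tn [u [Bu ud]] nd; case: n tn nd => [|n] tn nd.
  by move: tn; rewrite big_ord0 mulr0 expr0 => /eqP; rewrite oner_eq0.
have [f f_spec] := boolp.choice (inv_expansion_powers SB Bz Bc tn).
set m := (d - n.+1)%N.
exists (fun l => u l + z * \sum_(k < m) u (n.+1 + k)%N * f k l); split.
  move=> l; apply: subringD => //; apply: subringM => //.
  by apply: subring_sum => // k _; apply: subringM => //; case: (f_spec k).
rewrite ud (_ : \sum_(i < d) u i * t ^+ i = \sum_(i < n.+1 + m) u i * t ^+ i); last first.
  by rewrite /m subnKC // ltnW.
rewrite big_split_ord /=; congr (z * _).
have -> : \sum_(l < n.+1) (u l + z * \sum_(k < m) u (n.+1 + k)%N * f k l) * t ^+ l =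
   \sum_(l < n.+1) u l * t ^+ l +
   \sum_(l < n.+1) \sum_(k < m) z * u (n.+1 + k)%N * f k l * t ^+ l.
  rewrite -big_split; apply: eq_bigr => l _; rewrite mulrDl mulr_sumr mulr_suml.
  by congr (_ + _); apply: eq_bigr => k _; rewrite !mulrA.
congr (_ + _); rewrite exchange_big /=; apply: eq_bigr => k _.
have [_ ->] := f_spec k; rewrite !mulr_sumr; apply: eq_bigr => i _.
by rewrite !mulrA [u _ * z]mulrC.
Qed.

Section MaximalNoninv.
Variables (K : fieldType) (B : K -> Prop) (z : K).
Hypothesis MB : maximal_noninv B z.

Let SB : subring B. Proof. by case: MB. Qed.
Let Bz : B z. Proof. by case: MB. Qed.
Let z0 : z != 0. Proof. by case: MB. Qed.
Let Bz' : ~ B z^-1. Proof. by case: MB. Qed.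

Lemma maximal_noninv_adjoin t : ~ adjoin B t z^-1 -> B t.
Proof.
case: MB => _ _ _ _ maxB nBt; apply: (maxB _ (subring_adjoin t SB)) => //.
  exact: adjoin_sub.
exact: adjoin_gen.
Qed.

(* If 1/s is not in B for s = 1 - z b, maximality puts z^-1 in B[1/s], so z^-1 s^N is in
   B; as s^N = 1 - z c with c in B, z^-1 would be in B. *)
Lemma maximal_noninv_inv_1subr b : B b -> B (1 - z * b)^-1.
Proof.
move=> Bb; set s := 1 - z * b.
have Bs : B s by apply: subringB => //; [apply: subring1 | apply: subringM].
have s0 : s != 0.
  apply: contra_notN Bz'; rewrite /s subr_eq0 => /eqP zb1.
  by rewrite -[z^-1]mulr1 zb1 mulKf.
apply: maximal_noninv_adjoin => Bs_z'.
pose T w := exists N, B (w * s ^+ N).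
have ST : subring T.
  split; first by exists 0%N; rewrite mulr1; apply: subring1.
  split=> a c [N Ba] [M Bc]; exists (N + M)%N.
    have -> : (a - c) * s ^+ (N + M) = (a * s ^+ N) * s ^+ M - (c * s ^+ M) * s ^+ N.
      by rewrite exprD; ring.
    by apply: subringB => //; apply: subringM => //; apply: subringX.
  by rewrite exprD mulrACA; apply: subringM.
have [N Bz's] : T z^-1.
  apply: (adjoin_min ST _ _ Bs_z') => [x Bx | ]; first by exists 0%N; rewrite mulr1.
  by exists 1%N; rewrite expr1 mulVf //; apply: subring1.
have [c [Bc sN]] : exists c, B c /\ s ^+ N = 1 - z * c.
  elim: N {Bz's} => [|N [c [Bc sN]]].
    by exists 0; rewrite expr0 mulr0 subr0; split=> //; apply: subring0.
  exists (c + b - z * c * b); split; last by rewrite exprSr sN /s; ring.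
  by apply: subringB => //; [apply: subringD | apply: subringM => //; apply: subringM].
move: Bz's; rewrite sN mulrBr mulr1 mulrA mulVf // mul1r => Bz'c.
by apply: Bz'; rewrite -(subrK c z^-1); apply: subringD.
Qed.

(* Multiply the expansion in t^-1 by t^n and divide by the unit 1 - z v_0 of B. *)
Lemma inv_expansion_inv_power t n : t != 0 -> inv_expansion B z t^-1 n.+1 ->
  exists c : nat -> K, (forall k, B (c k)) /\ t ^+ n = z * \sum_(k < n) c k * t ^+ k.
Proof.
move=> t0 [v [Bv vn]].
have tn : t ^+ n = z * \sum_(i < n.+1) v i * t ^+ (n - i).
  rewrite -[t ^+ n]mul1r {1}vn -mulrA mulr_suml; congr (z * _); apply: eq_bigr => i _.
  have tnE : t ^+ n = t ^+ (n - i) * t ^+ i by rewrite -exprD subnK // -ltnS.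
  by rewrite -mulrA tnE exprVn [t ^- i * _]mulrCA mulVf ?mulr1 // expf_neq0.
rewrite big_ord_recl /= subn0 in tn.
set w := (1 - z * v 0%N)^-1.
have w0 : 1 - z * v 0%N != 0.
  apply: contra_notN Bz'; rewrite subr_eq0 => /eqP zv.
  by rewrite -[z^-1]mulr1 zv mulKf.
exists (fun k => w * v (n - k)%N); split.
  by move=> k; apply: subringM => //; apply: maximal_noninv_inv_1subr.
have w'tn : (1 - z * v 0%N) * t ^+ n = z * \sum_(i < n) v (bump 0 i) * t ^+ (n - bump 0 i).
  by rewrite mulrBl mul1r {1}tn mulrDr mulrA addrAC subrr add0r.
rewrite -[t ^+ n](mulKf w0) w'tn -/w mulrCA.
congr (z * _); rewrite mulr_sumr (reindex_inj rev_ord_inj) /=; apply: eq_bigr => i _.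
have -> : bump 0 (n - i.+1) = (n - i)%N by rewrite /bump /= add1n subnSK.
by rewrite (subKn (ltnW (ltn_ord i))) mulrA.
Qed.

(* Induction on d1 + d2: the shorter expansion lowers the degree of the longer one. *)
Lemma inv_expansion_not_both t d1 d2 :
  t != 0 -> inv_expansion B z t d1 -> inv_expansion B z t^-1 d2 -> False.
Proof.
move=> + E1 E2; have [N] := ubnP (d1 + d2); elim: N t d1 d2 E1 E2 => // N IH t d1 d2 E1 E2 dN t0.
have [d21|d12] := leqP d2 d1.
  case: d2 E2 d21 dN => [|n] E2 d21 dN; first exact: inv_expansion0 E2.
  have [c [Bc tn]] := inv_expansion_inv_power t0 E2.
  by apply: (IH t n n.+1) (inv_expansion_lower SB Bz Bc tn E1 d21) E2 _ t0; lia.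
case: d1 E1 d12 dN => [|n] E1 d12 dN; first exact: inv_expansion0 E1.
have t'0 : t^-1 != 0 by rewrite invr_eq0.
rewrite -[t]invrK in E1; have [c [Bc tn]] := inv_expansion_inv_power t'0 E1.
rewrite invrK in E1.
by apply: (IH t n.+1 n) E1 (inv_expansion_lower SB Bz Bc tn E2 (ltnW d12)) _ t0; lia.
Qed.

Lemma maximal_noninv_valuation : valuation_ring B.
Proof.
split=> // t t0; case: (classic (adjoin B t z^-1)) => Bt_z'; last first.
  by left; apply: maximal_noninv_adjoin.
case: (classic (adjoin B t^-1 z^-1)) => Bt'_z'; last first.
  by right; apply: maximal_noninv_adjoin.
have [d1 E1] := adjoin_inv_expansion z0 Bt_z'.
have [d2 E2] := adjoin_inv_expansion z0 Bt'_z'.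
by case: (inv_expansion_not_both t0 E1 E2).
Qed.

End MaximalNoninv.

Lemma zorn_chain_union (T : Type) (P : (T -> Prop) -> Prop) :
  (forall F : (T -> Prop) -> Prop, (forall X, F X -> P X) ->
     (forall X Y, F X -> F Y -> (forall x, X x -> Y x) \/ (forall x, Y x -> X x)) ->
     P (fun x => exists2 X, F X & X x)) ->
  exists A, P A /\ forall B, P B -> (forall x, A x -> B x) -> forall x, B x -> A x.
Proof.
move=> chainP; have [|A [PA maxA]] := @classical_sets.Zorn_bigcup T P.
  by move=> F FP Ftot; apply: chainP => // X Y FX FY; apply: Ftot.
exists A; split=> // B PB AB x Bx; apply: NNPP => Ax.
by apply: (maxA B) => //; split=> [y /AB // | BA]; apply: Ax; apply: BA.
Qed.

(* Zorn's lemma; the empty set is admitted so that the union of the empty chain qualifies. *)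
Lemma exists_maximal_subring_avoiding (K : fieldType) (S : K -> Prop) y :
  subring S -> ~ S y ->
  exists A, [/\ subring A, forall x, S x -> A x, ~ A y &
    forall B, subring B -> (forall x, A x -> B x) -> ~ B y -> forall x, B x -> A x].
Proof.
move=> SS Sy; pose good B := [/\ subring B, forall x, S x -> B x & ~ B y].
have [A [PA maxA]] : exists A, (good A \/ forall x, ~ A x) /\
    forall B, (good B \/ forall x, ~ B x) -> (forall x, A x -> B x) -> forall x, B x -> A x.
  apply: zorn_chain_union => F FP Ftot.
  case: (classic (exists2 X, F X & exists x, X x)) => [[X0 FX0 [x0 X0x0]] | none]; last first.
    by right=> x [X FX Xx]; apply: none; exists X => //; exists x.
  have goodF X x : F X -> X x -> good X by move=> FX Xx; case: (FP X FX) => // /(_ x).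
  have [SX0 SX0_sub _] := goodF X0 x0 FX0 X0x0.
  have common a b : (exists2 X, F X & X a) -> (exists2 X, F X & X b) ->
      exists2 X, F X & [/\ subring X, X a & X b].
    move=> [X1 FX1 X1a] [X2 FX2 X2b].
    have [X12|X21] := Ftot X1 X2 FX1 FX2.
      by exists X2 => //; split=> //; [case: (goodF X2 b FX2 X2b) | apply: X12].
    by exists X1 => //; split=> //; [case: (goodF X1 a FX1 X1a) | apply: X21].
  left; split.
  - split; first by exists X0 => //; apply: subring1.
    split=> a b Fa Fb; have [X FX [SX Xa Xb]] := common a b Fa Fb; exists X => //.
      exact: subringB.
    exact: subringM.
  - by move=> x Sx; exists X0 => //; apply: SX0_sub.
  - by move=> [X FX Xy]; case: (goodF X y FX Xy).
have [SA SA_sub Ay] : good A.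
  case: PA => // emptyA.
  have goodS : good S by [].
  have A_sub x : A x -> S x by move/emptyA.
  by have /emptyA := maxA _ (or_introl goodS) A_sub 1 (subring1 SS).
exists A; split=> // B SB AB By.
by apply: maxA => //; left; split=> // x /SA_sub /AB.
Qed.

(* Krull: a subring maximal among those containing R[1/y] but not y is a valuation ring. *)
Lemma exists_valuation_overring (K : fieldType) (R : K -> Prop) y :
  subring R -> integrally_closed R -> ~ R y ->
  exists V, [/\ valuation_ring V, forall x, R x -> V x & ~ V y].
Proof.
move=> SR ICR Ry.
have y0 : y != 0 by apply: contra_notN Ry => /eqP ->; apply: subring0.
have [A [SA RA Ay maxA]] :=
  exists_maximal_subring_avoiding (subring_adjoin y^-1 SR) (adjoin_inv_notin SR ICR Ry).
have MA : maximal_noninv A y^-1.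
  by split; rewrite ?invrK ?invr_eq0 //; apply: RA; apply: adjoin_gen.
exists A; split=> //; first exact: maximal_noninv_valuation MA.
by move=> x Rx; apply: RA; apply: adjoin_sub.
Qed.

(** * The constructible closure *)

Lemma valuation_ringT (K : fieldType) : valuation_ring (fun _ : K => True).
Proof. by split=> [|x _]; [apply: subringT | left]. Qed.

(* Intersect one valuation overring of R avoiding a witness of each F, together with K so
   that the family is nonempty. *)
Lemma exists_semilocal_prufer_avoiding (K : fieldType) (D R : K -> Prop) (Fs : seq (seq K)) :
  overring D R -> integrally_closed R ->
  (forall F, F \in Fs -> exists2 y, y \in F & ~ R y) ->
  exists R', [/\ overring D R', semilocal R', prufer R', forall x, R x -> R' x &
                 forall F, F \in Fs -> exists2 y, y \in F & ~ R' y].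
Proof.
move=> [SR DR] ICR Fs_out.
have Vex j : exists V : K -> Prop, (j < size Fs)%N ->
    [/\ valuation_ring V, forall x, R x -> V x & exists2 y, y \in nth [::] Fs j & ~ V y].
  case: (ltnP j (size Fs)) => jFs; last by exists (fun _ => True).
  have [y yF Ry] := Fs_out _ (mem_nth [::] jFs).
  have [Vy [VVy RVy Vyy]] := exists_valuation_overring SR ICR Ry.
  by exists Vy => _; split=> //; exists y.
have [V Vspec] := boolp.choice Vex.
pose W j := if j is j'.+1 then V j' else (fun _ : K => True).
pose js := iota 0 (size Fs).+1.
have Wv j : j \in js -> valuation_ring (W j).
  case: j => [_ | j]; first exact: valuation_ringT.
  by rewrite mem_iota ltnS => /Vspec [].
have RW x : R x -> bigcap_ring W js x.
  move=> Rx [//|j]; rewrite mem_iota ltnS => /Vspec [_ RV _].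
  exact: RV.
exists (bigcap_ring W js); split.
- by split=> [|x Dx]; [apply: subring_bigcap_ring Wv | apply: RW; apply: DR].
- by apply: bigcap_valuation_semilocal => //; apply: iota_uniq.
- by apply: bigcap_valuation_prufer => //; apply: iota_uniq.
- exact: RW.
move=> F FFs; have jFs : (index F Fs < size Fs)%N by rewrite index_mem.
have [_ _ [y yF Vy]] := Vspec _ jFs; rewrite nth_index // in yF.
exists y => // Ay; apply: Vy; apply: (Ay (index F Fs).+1).
by rewrite mem_iota ltnS.
Qed.

Lemma not_zbasic_witness (K : fieldType) (D R : K -> Prop) (F : seq K) :
  overring D R -> ~ zbasic D F R -> exists2 y, y \in F & ~ R y.
Proof.
move=> oR FR; apply: NNPP => noy; apply: FR; split=> // x xF.
by apply: NNPP => Rx; apply: noy; exists x.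
Qed.

(* The quasi-compact opens missing R are finite unions of basic opens, each witnessed by
   an element outside R; avoid all these witnesses at once. *)
Lemma integrally_closed_constructible_closure (K : fieldType) (D R : K -> Prop) :
  overring D R -> integrally_closed R ->
  constructible_closure D (fun R' => overring D R' /\ semilocal R' /\ prufer R') R.
Proof.
move=> oR ICR; split=> // n U b Uqc UR.
have cover k : exists mF : nat * (nat -> seq K), (k < n)%N ->
    (forall T, U k T -> exists2 i, (i < mF.1)%N & zbasic D (mF.2 i) T) /\
    (forall i T, (i < mF.1)%N -> zbasic D (mF.2 i) T -> U k T).
  case: (ltnP k n) => kn; last by exists (0%N, fun _ => [::]).
  have [openU qcU] := Uqc k kn.
  by have [m [F FU]] := zquasicompact_basic_cover openU qcU; exists (m, F).
have [mF mFspec] := boolp.choice cover.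
pose Fs := [seq (mF k).2 i | k <- [seq k <- iota 0 n | ~~ b k], i <- iota 0 (mF k).1].
have [|R' [oR' SR' PR' RR' R'Fs]] := exists_semilocal_prufer_avoiding (Fs := Fs) oR ICR.
  move=> _ /allpairsPdep [k [i [+ + ->]]]; rewrite mem_filter !mem_iota /= => /andP [bk kn] im.
  apply: not_zbasic_witness oR _ => FR.
  by have := (UR k kn).1 ((mFspec k kn).2 i R im FR); rewrite (negPf bk).
exists R'; split=> //; split=> // k kn; split=> [UR' | bk].
  case bk: (b k) => //; have [i im FR'] := (mFspec k kn).1 R' UR'.
  have [|y yF R'y] := R'Fs ((mF k).2 i); last by case: R'y; apply: FR'.2.
  by apply/allpairsPdep; exists k, i; rewrite mem_filter !mem_iota /= bk kn.
have [F [[_ FR] FU]] := (Uqc k kn).1.2 R ((UR k kn).2 bk).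
by apply: FU; split=> // x /FR /RR'.
Qed.

Theorem proposition6p1 (K : fieldType) (D : K -> Prop) :
  subring D -> quotient_field_of D ->
  forall R : K -> Prop,
    constructible_closure D
      (fun R' => overring D R' /\ semilocal R' /\ prufer R') R
    <-> (overring D R /\ integrally_closed R).
Proof.
move=> _ QF R; split; first exact: constructible_closure_integrally_closed.
by case; apply: integrally_closed_constructible_closure.
Qed.
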